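(* Let $\approx$ be an equinumerosity on $\mathbb W$. For finite sets $A,B\in\mathbb W$ we have $A\approx B$ if and only if $|A|=|B|$. Moreover, if $X\in\mathbb W$ is infinite and $A\in\mathbb W$ is finite, then $X\succ A$.
   Context: Let $\mathbb N=\{0,1,2,\dots\}$. Let $\mathbb{W}$ be the family of finitary point sets: sets $A\subseteq\bigcup_{k\ge1}\mathbb N^k$ of finite tuples of natural numbers (tuples of different lengths allowed) such that for every $n\in\mathbb N$ there is $h$ with $A\cap\{0,\dots,n\}^k=\emptyset$ for all $k>h$. Cartesian products are identified with concatenations: $A\times B=\{(a_1,\dots,a_k,b_1,\dots,b_h):(a_1,\dots,a_k)\in A,\ (b_1,\dots,b_h)\in B\}$; $\{n\}$ denotes the set whose only element is the 1-tuple $(n)$. $A,B\in\mathbb W$ are multipliable if distinct pairs $(a,b)\in A\times B$ have distinct concatenations. Given an equivalence relation $\approx$ on $\mathbb W$, write $A\succ B$, equivalently $B\prec A$, if there exist $A',B'\in\mathbb W$ with $B'\subsetneq A'$, $A\approx A'$ and $B\approx B'$. An equinumerosity is an equivalence relation $\approx$ on $\mathbb W$ such that for all $A,B\in\mathbb W$: (AP) $A\approx B$ iff $A\setminus B\approx B\setminus A$; (ZP) exactly one of $A\approx B$, $A\succ B$, $A\prec B$ holds; (TP) if $T$ is injective on $A$ and $T(a)$ is a permutation of the coordinates of $a$ for every $a\in A$, then $A\approx T[A]$; (UP) $A\times\{n\}\approx A$ for all $n\in\mathbb N$; (PP) if $A,B$ are multipliable, $A',B'$ are multipliable, $A\approx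 A'$ and $B\approx B'$, then $A\times B\approx A'\times B'$. *)

From mathcomp Require Import all_boot.
Set Implicit Arguments. Unset Strict Implicit. Unset Printing Implicit Defensive.

Definition pset := seq nat -> Prop.

Definition tuples_only (A : pset) : Prop := forall a, A a -> a <> [::].

Definition finitary (A : pset) : Prop :=
  forall n : nat, exists h : nat, forall a, A a -> h < size a -> ~~ all (fun x => x <= n) a.

Definition inW (A : pset) : Prop := tuples_only A /\ finitary A.

Definition setD (A B : pset) : pset := fun x => A x /\ ~ B x.

Definition proper_sub (B A : pset) : Prop :=
  (forall x, B x -> A x) /\ exists x, A x /\ ~ B x.

(* Cartesian product = concatenation *)
Definition setprod (A B : pset) : pset :=
  fun c => exists a b, A a /\ B b /\ c = a ++ b.

Definition sing (n : nat) : pset := fun c => c = [:: n].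

Definition image (T : seq nat -> seq nat) (A : pset) : pset :=
  fun c => exists a, A a /\ c = T a.

Definition multipliable (A B : pset) : Prop :=
  forall a b a' b', A a -> B b -> A a' -> B b' -> a ++ b = a' ++ b' -> a = a' /\ b = b'.

Definition succ (approx : pset -> pset -> Prop) (A B : pset) : Prop :=
  exists A' B', inW A' /\ inW B' /\ proper_sub B' A' /\ approx A A' /\ approx B B'.

Definition exactly_one3 (P Q R : Prop) : Prop :=
  (P /\ ~ Q /\ ~ R) \/ (~ P /\ Q /\ ~ R) \/ (~ P /\ ~ Q /\ R).

Definition equinumerosity (approx : pset -> pset -> Prop) : Prop :=
  (forall A, inW A -> approx A A) /\
  (forall A B, inW A -> inW B -> approx A B -> approx B A) /\
  (forall A B C, inW A -> inW B -> inW C -> approx A B -> approx B C -> approx A C) /\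
  (forall A B, inW A -> inW B -> (approx A B <-> approx (setD A B) (setD B A))) /\
  (forall A B, inW A -> inW B ->
     exactly_one3 (approx A B) (succ approx A B) (succ approx B A)) /\
  (forall (A : pset) (T : seq nat -> seq nat), inW A ->
     (forall a a', A a -> A a' -> T a = T a' -> a = a') ->
     (forall a, A a -> perm_eq (T a) a) ->
     approx A (image T A)) /\
  (forall A (n : nat), inW A -> approx (setprod A (sing n)) A) /\
  (forall A B A' B', inW A -> inW B -> inW A' -> inW B' ->
     multipliable A B -> multipliable A' B' -> approx A A' -> approx B B' ->
     approx (setprod A B) (setprod A' B')).

(* A is finite, enumerated without repetition by l; then |A| = size l *)
Definition enumerates (A : pset) (l : seq (seq nat)) : Prop :=
  uniq l /\ forall x, A x <-> x \in l.

Definition finite_set (A : pset) : Prop := exists l, enumerates A l.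

From Pilot Require Import Defs.
From Stdlib Require Import Classical FunctionalExtensionality PropExtensionality.
From mathcomp Require Import all_boot.
(* Re-import so that [setD] and [image] mean the point-set versions, not finset's. *)
Import Defs.

Set Implicit Arguments. Unset Strict Implicit. Unset Printing Implicit Defensive.

(* Finite sets are handled as [of_seq l] for duplicate-free [l].  Each axiom of
   an equinumerosity moves one step: (UP) shortens a tuple, (TP) permutes it,
   so any two singletons are equinumerous; (AP) then lets us replace one
   element of a finite set by another, and induction gives |A| = |B| -> A ~ B.
   Conversely a strictly longer list strictly contains a set of the size of
   the shorter one, and (ZP) forbids A ~ B together with A > B.  An infinite X
   contains finite sets of every size plus a point outside them, whence X > A. *)

Lemma pset_ext (A B : pset) : (forall x, A x <-> B x) -> A = B.
Proof.
by move=> AB; apply: functional_extensionality => x; apply: propositional_extensionality.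
Qed.

Definition of_seq (l : seq (seq nat)) : pset := fun x => x \in l.

Definition pset1 (a : seq nat) : pset := fun c => c = a.

Lemma of_seq_perm l l' : perm_eq l l' -> of_seq l = of_seq l'.
Proof. by move=> pll'; apply: pset_ext => x; rewrite /of_seq (perm_mem pll'). Qed.

Lemma size_le_sumn_size (l : seq (seq nat)) x : x \in l -> size x <= sumn (map size l).
Proof.
elim: l => //= y l IH; rewrite in_cons => /orP [/eqP -> | /IH le_x].
  exact: leq_addr.
exact: leq_trans le_x (leq_addl _ _).
Qed.

Lemma uniq_notin_take (T : eqType) (s : seq T) n :
  uniq s -> n < size s -> exists2 x, x \in s & x \notin take n s.
Proof.
move=> us; rewrite -subn_gt0 -size_drop.
case ed: (drop n s) => [//|x r] _.
exists x; first by rewrite -(cat_take_drop n s) ed mem_cat mem_head orbT.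
by move: us; rewrite -{1}(cat_take_drop n s) ed cat_uniq /= => /and4P [_ /norP []].
Qed.

Lemma inW_of_seq l : [::] \notin l -> inW (of_seq l).
Proof.
move=> nil_l; split.
  by move=> a la a_nil; rewrite /of_seq a_nil in la; rewrite la in nil_l.
move=> n; exists (sumn (map size l)) => a la.
by rewrite ltnNge (size_le_sumn_size la).
Qed.

Lemma nil_notin_cons (c : seq nat) l : c != [::] -> [::] \notin l -> [::] \notin c :: l.
Proof. by rewrite in_cons negb_or eq_sym => -> . Qed.

Lemma inW_pset1 a : a != [::] -> inW (pset1 a).
Proof.
move=> a_nil; split; first by move=> x -> x_nil; rewrite x_nil in a_nil.
by move=> n; exists (size a) => x ->; rewrite ltnn.
Qed.

Lemma inW_pset1_cat a b : a != [::] -> inW (pset1 (a ++ b)).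
Proof. by case: a => // x a _; apply: inW_pset1. Qed.

Lemma inW_notin_nil (A : pset) l : inW A -> enumerates A l -> [::] \notin l.
Proof. by case=> nilA _ [_ Al]; apply/negP => /Al /nilA. Qed.

Lemma enumerates_of_seq (A : pset) l : enumerates A l -> A = of_seq l.
Proof. by case=> _ Al; apply: pset_ext => x; rewrite /of_seq Al. Qed.

Lemma infinite_notin_seq (X : pset) (l : seq (seq nat)) :
  ~ finite_set X -> uniq l -> (forall x, x \in l -> X x) -> exists x, X x /\ x \notin l.
Proof.
move=> infX ul lX; apply: NNPP => noX; apply: infX; exists l; split => // x.
split; last exact: lX.
by move=> Xx; apply: NNPP => xl; apply: noX; exists x; split => //; apply/negP.
Qed.

Lemma infinite_has_seq_of_size (X : pset) n : ~ finite_set X ->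
  exists l : seq (seq nat), [/\ uniq l, size l = n & forall x, x \in l -> X x].
Proof.
move=> infX; elim: n => [|n [l [ul sl lX]]]; first by exists [::].
have [x [Xx xl]] := infinite_notin_seq infX ul lX.
exists (x :: l); split; [by rewrite /= xl ul | by rewrite /= sl |].
by move=> y; rewrite in_cons => /orP [/eqP -> | /lX].
Qed.

Section Equinumerosity.

Variable approx : pset -> pset -> Prop.
Hypothesis equi : equinumerosity approx.

Lemma approx_refl A : inW A -> approx A A.
Proof. by case: equi => refl _; apply: refl. Qed.

Lemma approx_sym A B : inW A -> inW B -> approx A B -> approx B A.
Proof. by case: equi => _ [sym _]; apply: sym. Qed.

Lemma approx_trans B A C : inW A -> inW B -> inW C ->
  approx A B -> approx B C -> approx A C.
Proof. by case: equi => _ [_ [trans _]] WA WB WC; apply: trans WB WC. Qed.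

Lemma approx_setD A B A' B' : inW A -> inW B -> inW A' -> inW B' ->
  setD A B = setD A' B' -> setD B A = setD B' A' -> approx A B -> approx A' B'.
Proof.
case: equi => _ [_ [_ [AP _]]] WA WB WA' WB' eAB eBA AB.
by apply/(AP _ _ WA' WB'); rewrite -eAB -eBA; apply/(AP _ _ WA WB).
Qed.

Lemma approx_not_succ A B : inW A -> inW B -> approx A B ->
  ~ succ approx A B /\ ~ succ approx B A.
Proof.
case: equi => _ [_ [_ [_ [ZP _]]]] WA WB AB.
by case: (ZP _ _ WA WB) => [[_ []] | [[] | []]].
Qed.

Lemma approx_pset1_perm a b : a != [::] -> perm_eq a b -> approx (pset1 a) (pset1 b).
Proof.
case: equi => _ [_ [_ [_ [_ [TP _]]]]] a_nil ab.
have -> : pset1 b = image (fun=> b) (pset1 a).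
  by apply: pset_ext => x; split => [-> | [_ [_ ->]]] //; exists a.
by apply: TP (inW_pset1 a_nil) _ _ => [? ? -> -> | ? ->] //; rewrite perm_sym.
Qed.

Lemma approx_pset1_rcons a n : a != [::] -> approx (pset1 (rcons a n)) (pset1 a).
Proof.
case: equi => _ [_ [_ [_ [_ [_ [UP _]]]]]] a_nil.
have -> : pset1 (rcons a n) = setprod (pset1 a) (sing n).
  apply: pset_ext => x; split => [-> | [_ [_ [-> [-> ->]]]]]; last by rewrite cats1.
  by exists a, [:: n]; rewrite cats1.
exact: UP (inW_pset1 a_nil).
Qed.

Lemma approx_pset1_catr a b : a != [::] -> approx (pset1 (a ++ b)) (pset1 a).
Proof.
move=> a_nil; elim/last_ind: b => [|b n IH]; first by rewrite cats0; apply/approx_refl/inW_pset1.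
apply: (approx_trans (B := pset1 (a ++ b))) IH; try exact: inW_pset1_cat; first exact: inW_pset1.
by rewrite -rcons_cat; apply: approx_pset1_rcons; case: a a_nil.
Qed.

Lemma approx_pset1 a b : a != [::] -> b != [::] -> approx (pset1 a) (pset1 b).
Proof.
move=> a_nil b_nil.
apply: (approx_trans (B := pset1 (a ++ b)));
  try exact: inW_pset1; try exact: inW_pset1_cat.
  by apply: approx_sym; [exact: inW_pset1_cat | exact: inW_pset1 | exact: approx_pset1_catr].
apply: (approx_trans (B := pset1 (b ++ a)));
  try exact: inW_pset1; try exact: inW_pset1_cat.
  by apply: approx_pset1_perm; [case: a a_nil | rewrite perm_catC perm_refl].
exact: approx_pset1_catr.
Qed.

Lemma approx_of_seq_cons a l1 l2 : a != [::] -> [::] \notin l1 -> [::] \notin l2 ->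
  a \notin l1 -> a \notin l2 ->
  approx (of_seq l1) (of_seq l2) -> approx (of_seq (a :: l1)) (of_seq (a :: l2)).
Proof.
move=> a_nil nil_l1 nil_l2 al1 al2 l1l2.
have setD_cons l l' : a \notin l ->
    setD (of_seq l) (of_seq l') = setD (of_seq (a :: l)) (of_seq (a :: l')).
  move=> al; apply: pset_ext => x; rewrite /setD /of_seq !in_cons.
  by case: eqP => [-> | _]; rewrite ?eqxx ?(negbTE al) //=; split => -[].
apply: approx_setD l1l2; rewrite -?setD_cons //; apply: inW_of_seq => //; exact: nil_notin_cons.
Qed.

Lemma approx_of_seq_swap a b l : a != [::] -> b != [::] -> [::] \notin l ->
  a \notin l -> b \notin l -> approx (of_seq (a :: l)) (of_seq (b :: l)).
Proof.
move=> a_nil b_nil nil_l al bl.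
have [<- | ab] := eqVneq a b; first exact/approx_refl/inW_of_seq/nil_notin_cons.
have setD_swap c d : c \notin l -> c != d ->
    setD (pset1 c) (pset1 d) = setD (of_seq (c :: l)) (of_seq (d :: l)).
  move=> cl cd; apply: pset_ext => x; rewrite /setD /of_seq /pset1 !in_cons.
  split=> [[-> _] | [/orP [/eqP -> | xl] xdl]].
  - by rewrite eqxx (negbTE cd) (negbTE cl).
  - by split=> // /eqP; rewrite (negbTE cd).
  - by rewrite xl orbT in xdl.
apply: (approx_setD (A := pset1 a) (B := pset1 b)); try exact: inW_pset1;
  try (apply: inW_of_seq; exact: nil_notin_cons).
- by rewrite setD_swap.
- by rewrite setD_swap // eq_sym.
exact: approx_pset1.
Qed.

Lemma approx_of_seq_size l1 l2 : uniq l1 -> uniq l2 -> [::] \notin l1 -> [::] \notin l2 ->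
  size l1 = size l2 -> approx (of_seq l1) (of_seq l2).
Proof.
elim: l1 l2 => [|a l1 IH] l2 u1 u2 nil_l1 nil_l2.
  by move/esym/size0nil ->; apply/approx_refl/inW_of_seq.
case/andP: u1 => al1 u1; move: nil_l1; rewrite in_cons negb_or eq_sym => /andP [a_nil nil_l1].
have [al2 | al2] := boolP (a \in l2).
  have nil_l2' : [::] \notin rem a l2 by apply: contra nil_l2; apply: mem_rem.
  rewrite (of_seq_perm (perm_to_rem al2)) (perm_size (perm_to_rem al2)) => -[s].
  by apply: approx_of_seq_cons; rewrite ?mem_rem_uniqF //; apply: IH; rewrite ?rem_uniq.
case: l2 u2 nil_l2 al2 => // b l2 /andP [bl2 u2].
rewrite !in_cons !negb_or eq_sym => /andP [b_nil nil_l2] /andP [_ al2] [s].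
apply: (approx_trans (B := of_seq (a :: l2))); try (apply: inW_of_seq; exact: nil_notin_cons).
  by apply: approx_of_seq_cons => //; apply: IH.
exact: approx_of_seq_swap.
Qed.

Lemma succ_of_seq_size l1 l2 : size l1 < size l2 -> uniq l1 -> uniq l2 ->
  [::] \notin l1 -> [::] \notin l2 -> succ approx (of_seq l2) (of_seq l1).
Proof.
move=> lt12 u1 u2 nil_l1 nil_l2.
have nil_take : [::] \notin take (size l1) l2 by apply: contra nil_l2; apply: mem_take.
exists (of_seq l2), (of_seq (take (size l1) l2)).
split; first exact: inW_of_seq.
split; first exact: inW_of_seq.
split; last split.
- split=> [x /mem_take // | ].
  have [x xl2 xt] := uniq_notin_take u2 lt12.
  by exists x; split; last apply/negP.
- exact/approx_refl/inW_of_seq.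
apply: approx_of_seq_size; rewrite ?take_uniq // size_takel //; exact: ltnW.
Qed.

Lemma succ_infinite_of_seq X l : inW X -> ~ finite_set X -> uniq l -> [::] \notin l ->
  succ approx X (of_seq l).
Proof.
move=> WX infX ul nil_l.
have [l' [ul' sl' l'X]] := infinite_has_seq_of_size (size l) infX.
have [x [Xx xl']] := infinite_notin_seq infX ul' l'X.
have nil_l' : [::] \notin l' by apply/negP => /l'X; case: WX => nilX _ /nilX.
exists X, (of_seq l'); split=> //; split; first exact: inW_of_seq.
split; first by split=> [y /l'X | ]; last by exists x; split=> //; apply/negP.
split; first exact: approx_refl.
exact: approx_of_seq_size.
Qed.

End Equinumerosity.

Theorem proposition1p8 (approx : pset -> pset -> Prop) :
  equinumerosity approx ->
  (forall (A B : pset) (lA lB : seq (seq nat)),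
      inW A -> inW B -> enumerates A lA -> enumerates B lB ->
      (approx A B <-> size lA = size lB)) /\
  (forall (X A : pset), inW X -> inW A -> ~ finite_set X -> finite_set A ->
      succ approx X A).
Proof.
move=> equi; split.
  move=> A B lA lB WA WB eA eB.
  have [[uA _] [uB _]] := (eA, eB).
  have [nA nB] := (inW_notin_nil WA eA, inW_notin_nil WB eB).
  rewrite (enumerates_of_seq eA) (enumerates_of_seq eB) in WA WB *.
  split=> [AB | ]; last exact: approx_of_seq_size.
  have [notAB notBA] := approx_not_succ equi WA WB AB.
  case: (ltngtP (size lA) (size lB)) => // lt; [case: notBA | case: notAB];
    exact: succ_of_seq_size.
move=> X A WX WA infX [lA eA].
rewrite (enumerates_of_seq eA); apply: succ_infinite_of_seq => //.
  by case: eA.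
exact: inW_notin_nil WA eA.
Qed.
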